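(* Let $A$ be such that $\mathfrak{g}=\mathfrak{g}(A)$ is finite dimensional and fix $i\in\{1,\dots,\theta\}$. If $\beta\in\varDelta^A_{+,j}$ for some $j\in\{1,\dots,p\}$ (i.e. $\beta$ is an $\alpha_i$-string generator), then $M_\beta$ is contained in the Lie subalgebra (in $\mathsf{Rep}(\boldsymbol\alpha_p)$) of $(\mathfrak{g}',e_i)$ generated by the submodules $M_{\alpha_k}$, $k\neq i$.
   Context: $\Bbbk$ algebraically closed of characteristic $p>0$; $A=(a_{jk})\in\Bbbk^{\theta\times\theta}$ with $a_{jj}\in\{0,2\}$ and $a_{jk}=0$ iff $a_{kj}=0$ ($j\ne k$). $\mathfrak{g}(A)$ is the contragredient Lie algebra generated by a Cartan subalgebra $\mathfrak{h}$ (with $\xi_k\in\mathfrak{h}^*$, $h_j\in\mathfrak{h}$, $\xi_k(h_j)=a_{jk}$) and $e_j,f_j$ subject to $[h,h']=0$, $[h,e_j]=\xi_j(h)e_j$, $[h,f_j]=-\xi_j(h)f_j$, $[e_j,f_k]=\delta_{jk}h_j$, modulo the largest graded ideal meeting $\mathfrak{h}$ trivially; $\mathbb{Z}^\theta$-graded with $\deg e_j=\alpha_j$. $\varDelta^A_+=\{\beta\in\mathbb{N}_0^\theta\setminus0:\mathfrak{g}_\beta\neq0\}$; in the finite-dimensional case each root space is one-dimensional, spanned by a fixed $e_\beta$. $\mathfrak{g}'=[\mathfrak{g},\mathfrak{g}]$, and $(\mathfrak{g}',e_i)$ denotes $\mathfrak{g}'$ as a Lie algebra in $\mathsf{Rep}(\boldsymbol\alpha_p)$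 (modules over $\Bbbk[t]/(t^p)$, $t$ primitive) with $t$ acting by $\operatorname{ad}e_i$. For $j\in\{1,\dots,p\}$, $\varDelta^A_{+,j}$ is the set of $\beta\ne\alpha_i$ with $\beta+k\alpha_i\in\varDelta^A_+$ for $0\le k<j$ and $\beta-\alpha_i,\beta+j\alpha_i\notin\varDelta^A_+$; for such $\beta$, $M_\beta=\bigoplus_{k=0}^{j-1}\Bbbk e_{\beta+k\alpha_i}$ (an $\operatorname{ad}e_i$-stable subspace). For $k\ne i$, $\alpha_k$ lies in some $\varDelta^A_{+,j}$. *)

From HB Require Import structures.
From mathcomp Require Import all_boot all_order all_algebra.
Set Implicit Arguments. Unset Strict Implicit. Unset Printing Implicit Defensive.
Import GRing.Theory.
Local Open Scope ring_scope.

Section LieDefs.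
Variables (K : fieldType) (L : vectType K) (br : L -> L -> L).

Definition lie_bracket : Prop :=
  [/\ forall a x y z, br (a *: x + y) z = a *: br x z + br y z,
      forall a x y z, br z (a *: x + y) = a *: br z x + br z y,
      forall x, br x x = 0 &
      forall x y z, br x (br y z) + br y (br z x) + br z (br x y) = 0].

Definition bracket_sub (U V W : {vspace L}) : Prop :=
  forall u v, u \in U -> v \in V -> br u v \in W.

Definition subalgebra (U : {vspace L}) : Prop := bracket_sub U U U.
Definition lie_ideal (I : {vspace L}) : Prop := bracket_sub fullv I I.

(** g' = [g, g] : the span of all brackets (= span of brackets of basis vectors) *)
Definition derived : {vspace L} :=
  <<[seq br u v | u <- (vbasis fullv : seq L), v <- (vbasis fullv : seq L)]>>%VS.

Variable theta : nat.

Definition alpha (k : 'I_theta) : 'rV[int]_theta := delta_mx 0 k.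

Definition Zgrading (gr : 'rV[int]_theta -> {vspace L}) : Prop :=
  exists S : seq 'rV[int]_theta,
    [/\ uniq S, forall a, a \notin S -> gr a = 0%VS,
        directv (\sum_(a <- S) gr a), (\sum_(a <- S) gr a)%VS = fullv &
        forall a b, bracket_sub (gr a) (gr b) (gr (a + b))].

Definition graded_subspace (gr : 'rV[int]_theta -> {vspace L}) (I : {vspace L}) :=
  exists S : seq 'rV[int]_theta, (I <= \sum_(a <- S) (I :&: gr a))%VS.

(** (L, br, h, e, f, hc, xi, gr) is (a model of) the contragredient Lie
    algebra g(A) with its Z^theta-grading, built on a realization of A. *)
Definition is_contragredient (A : 'M[K]_theta) (h : {vspace L})
  (e f hc : 'I_theta -> L) (xi : 'I_theta -> L -> K)
  (gr : 'rV[int]_theta -> {vspace L}) : Prop :=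
  [/\ lie_bracket,
      (* realization of A *)
      [/\ forall k a x y, xi k (a *: x + y) = a * xi k x + xi k y,
          (forall j, hc j \in h) /\
          forall j k, xi k (hc j) = A j k,
          \dim h = (2 * theta - \rank A)%N,
          (forall c : 'I_theta -> K,
              (forall x, x \in h -> \sum_k c k * xi k x = 0) -> forall k, c k = 0) &
          (forall c : 'I_theta -> K,
              \sum_k c k *: hc k = 0 -> forall k, c k = 0)],
      [/\ forall x y, x \in h -> y \in h -> br x y = 0,
          forall j x, x \in h -> br x (e j) = xi j x *: e j,
          forall j x, x \in h -> br x (f j) = - (xi j x *: f j) &
          forall j k, br (e j) (f k) = if j == k then hc j else 0],
      (forall U : {vspace L}, subalgebra U -> (h <= U)%VS ->
          (forall j, e j \in U /\ f j \in U) -> U = fullv) /\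
      [/\ Zgrading gr, (h <= gr 0%R)%VS,
          forall j, e j \in gr (alpha j) &
          forall j, f j \in gr (- alpha j)] &
      (* quotient by the largest graded ideal meeting h trivially *)
      (forall I : {vspace L}, lie_ideal I -> graded_subspace gr I ->
          (I :&: h = 0)%VS -> I = 0%VS)].

Variable gr : 'rV[int]_theta -> {vspace L}.

Definition pos_root (b : 'rV[int]_theta) : Prop :=
  [/\ forall k, 0 <= b 0 k, b != 0 & gr b != 0%VS].

Definition string_gen (i : 'I_theta) (j : nat) (b : 'rV[int]_theta) : Prop :=
  [/\ b != alpha i,
      forall k, (k < j)%N -> pos_root (b + alpha i *+ k),
      ~ pos_root (b - alpha i) &
      ~ pos_root (b + alpha i *+ j)].

Definition Mstring (i : 'I_theta) (j : nat) (b : 'rV[int]_theta) : {vspace L} :=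
  (\sum_(k < j) gr (b + alpha i *+ k)%R)%VS.

(** Lie subalgebra in Rep(alpha_p) of (g', e_i): a subspace of g' closed
    under the bracket and stable under t = ad e_i. *)
Definition rep_subalgebra (i : 'I_theta) (e : 'I_theta -> L) (U : {vspace L}) :=
  [/\ (U <= derived)%VS, subalgebra U & forall u, u \in U -> br (e i) u \in U].

(** V lies in the Lie subalgebra (in Rep(alpha_p)) of (g', e_i) generated by
    the submodules M_{alpha_k}, k <> i, i.e. in every such subalgebra that
    contains them. *)
Definition in_generated_subalgebra (p : nat) (i : 'I_theta) (e : 'I_theta -> L)
  (V : {vspace L}) : Prop :=
  forall U : {vspace L}, rep_subalgebra i e U ->
    (forall (k : 'I_theta) (l : nat), k != i -> (1 <= l <= p)%N ->
        string_gen i l (alpha k) -> (Mstring i l (alpha k) <= U)%VS) ->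
    (V <= U)%VS.

End LieDefs.

From HB Require Import structures.
From mathcomp Require Import all_boot all_order all_algebra.
From mathcomp Require Import zify ring.
Import GRing.Theory Num.Theory Order.TTheory.
Local Open Scope ring_scope.

(* Let n+ and n- be the subalgebras generated by the e_j and by the f_j. The
   defining relations give g = n- + h + n+, and the grading separates the three
   summands. For k <> i put w_m = (ad e_i)^m e_k. Every ad f_j kills w_p: for
   j = i the coefficient is p a_ik + C(p,2) a_ii, which vanishes since p = 0 in K
   and a_ii is 0 or 2. So w_p generates a graded ideal inside n+, which meets h
   trivially and hence is zero. If l is least with w_l = 0, the component of n+
   of degree alpha_k + l alpha_i is spanned by w_l = 0; thus alpha_k is an
   alpha_i-string generator of length l <= p and e_k = w_0 lies in M_alpha_k.
   A subalgebra stable under ad e_i that contains these modules therefore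
   contains the e_k, k <> i, and the subalgebra n+' they generate under all
   ad e_j. Since n+ = n+' + K e_i and n+' has no component of degree alpha_i,
   every positive root space other than g_alpha_i lies in n+', and M_beta is a
   sum of such root spaces. *)

Set Implicit Arguments. Unset Strict Implicit. Unset Printing Implicit Defensive.

Section LieBracket.
Variables (K : fieldType) (L : vectType K) (br : L -> L -> L).
Hypothesis brL : lie_bracket br.

Lemma brLl a x y z : br (a *: x + y) z = a *: br x z + br y z.
Proof. by case: brL. Qed.

Lemma brLr a x y z : br z (a *: x + y) = a *: br z x + br z y.
Proof. by case: brL. Qed.

Lemma brxx x : br x x = 0.
Proof. by case: brL. Qed.

Lemma brDl x y z : br (x + y) z = br x z + br y z.
Proof. by have := brLl 1 x y z; rewrite !scale1r. Qed.

Lemma brDr x y z : br z (x + y) = br z x + br z y.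
Proof. by have := brLr 1 x y z; rewrite !scale1r. Qed.

Lemma br0l z : br 0 z = 0.
Proof. by apply: (@addrI _ (br 0 z)); rewrite -brDl !addr0. Qed.

Lemma br0r z : br z 0 = 0.
Proof. by apply: (@addrI _ (br z 0)); rewrite -brDr !addr0. Qed.

Lemma brZl a x z : br (a *: x) z = a *: br x z.
Proof. by have := brLl a x 0 z; rewrite br0l !addr0. Qed.

Lemma brZr a x z : br z (a *: x) = a *: br z x.
Proof. by have := brLr a x 0 z; rewrite br0r !addr0. Qed.

Lemma brNl x z : br (- x) z = - br x z.
Proof. by rewrite -scaleN1r brZl scaleN1r. Qed.

Lemma brNr x z : br z (- x) = - br z x.
Proof. by rewrite -scaleN1r brZr scaleN1r. Qed.

Lemma br_anticomm x y : br x y = - br y x.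
Proof.
apply/eqP; rewrite -addr_eq0.
by have := brxx (x + y); rewrite brDl !brDr !brxx add0r addr0 => ->.
Qed.

Lemma br_leibniz x y z : br x (br y z) = br (br x y) z + br y (br x z).
Proof.
case: brL => _ _ _ /(_ x y z) /eqP; rewrite -addrA addr_eq0 => /eqP ->.
by rewrite opprD (br_anticomm z x) brNr opprK (br_anticomm z) opprK addrC.
Qed.

End LieBracket.

Lemma span_ind (K : fieldType) (L : vectType K) (P : L -> Prop) (s : seq L) :
  P 0 -> (forall a x y, P x -> P y -> P (a *: x + y)) ->
  {in s, forall x, P x} -> {in <<s>>%VS, forall y, P y}.
Proof.
move=> P0 PL Ps y /(coord_span (X := in_tuple s)) ->.
elim/big_rec: _ => // t acc _ Pacc; apply: PL => //; apply: Ps.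
by rewrite mem_nth // size_tuple.
Qed.

Section AdClosure.
Variables (K : fieldType) (L : vectType K) (br : L -> L -> L).
Hypothesis brL : lie_bracket br.
Variables (I : finType) (g : I -> L) (X : seq L).

Definition ad_step (s : seq L) : seq L := s ++ [seq br (g j) x | j <- enum I, x <- s].

Local Notation ad_iter n := (<<iter n ad_step X>>%VS).

Lemma ad_iter_ind (P : L -> Prop) :
  P 0 -> (forall a x y, P x -> P y -> P (a *: x + y)) ->
  {in X, forall x, P x} -> (forall j y, P y -> P (br (g j) y)) ->
  forall n, {in ad_iter n, forall y, P y}.
Proof.
move=> P0 PL PX Pg n; apply: span_ind => //.
elim: n => [|n IH] x; first exact: PX.
rewrite iterS mem_cat => /orP[/IH //|/allpairsP[[j y] [_ /IH Py ->]]].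
exact: Pg.
Qed.

Lemma ad_iterS n : (ad_iter n <= ad_iter n.+1)%VS.
Proof. by apply/span_subvP => x xs; rewrite memv_span // iterS mem_cat xs. Qed.

Lemma ad_iter_br n j : {in ad_iter n, forall y, br (g j) y \in ad_iter n.+1}.
Proof.
apply: span_ind => [|a x y Hx Hy|x xs]; first by rewrite br0r ?mem0v.
  by rewrite brLr // memvD // memvZ.
rewrite memv_span // iterS mem_cat; apply/orP; right.
by apply/allpairsP; exists (j, x); rewrite mem_enum.
Qed.

Lemma ad_iter_stableS n :
  (ad_iter n.+1 <= ad_iter n)%VS -> (ad_iter n.+2 <= ad_iter n.+1)%VS.
Proof.
move=> sn; apply/span_subvP => x; rewrite [iter n.+2 _ _]iterS mem_cat.
case/orP=> [/memv_span //|/allpairsP[[j y] [_ /memv_span/(subvP sn) yn ->]]].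
exact: ad_iter_br.
Qed.

Lemma ad_iter_stable_from n m : (n <= m)%N ->
  (ad_iter n.+1 <= ad_iter n)%VS -> (ad_iter m.+1 <= ad_iter m)%VS.
Proof. by move=> /subnK <- sn; elim: (m - n)%N => //= d; apply: ad_iter_stableS. Qed.

(* The spans increase strictly until they stabilize, hence within \dim {:L} steps. *)
Lemma ad_iter_stable : (ad_iter (\dim {:L}).+1 <= ad_iter (\dim {:L}))%VS.
Proof.
set D := \dim {:L}; apply/idPn => unstable.
have dim_ge n : (n <= D.+1)%N -> (n <= \dim (ad_iter n))%N.
  elim: n => [//|n IH] lt_nD; apply: leq_ltn_trans (IH (ltnW lt_nD)) _.
  rewrite (ltn_leqif (dimv_leqif_sup (ad_iterS n))).
  by apply: contra unstable; apply: ad_iter_stable_from.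
by have := leq_trans (dim_ge _ (leqnn _)) (dimvS (subvf (ad_iter D.+1))); rewrite ltnn.
Qed.

Definition ad_closure : {vspace L} := ad_iter (\dim {:L}).

Lemma ad_closure_ind (P : L -> Prop) :
  P 0 -> (forall a x y, P x -> P y -> P (a *: x + y)) ->
  {in X, forall x, P x} -> (forall j y, P y -> P (br (g j) y)) ->
  {in ad_closure, forall y, P y}.
Proof. by move=> *; apply: ad_iter_ind. Qed.

Lemma mem_ad_closure x : x \in X -> x \in ad_closure.
Proof.
move=> xX; rewrite /ad_closure; elim: (\dim {:L}) => [|n IH]; first exact: memv_span.
exact: subvP (ad_iterS n) _ IH.
Qed.

Lemma ad_closure_br j : {in ad_closure, forall y, br (g j) y \in ad_closure}.
Proof. by move=> y /(ad_iter_br j)/(subvP ad_iter_stable). Qed.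

Lemma ad_closure_min (W : {vspace L}) :
  {subset X <= W} -> (forall j, {in W, forall w, br (g j) w \in W}) ->
  (ad_closure <= W)%VS.
Proof.
move=> XW gW; apply/subvP; apply: ad_closure_ind => //; first exact: mem0v.
by move=> a x y xW yW; rewrite memvD // memvZ.
Qed.

Local Notation C := ad_closure.

Lemma ad_closure_eigen_stable z :
  (forall j, exists c, br z (g j) = c *: g j) ->
  {in X, forall x, br z x \in C} -> {in C, forall y, br z y \in C}.
Proof.
move=> zg zX y yC; suff: y \in C /\ br z y \in C by case.
move: y yC; apply: ad_closure_ind => [|a x y [xC zx] [yC zy]|x xX|j y [yC zy]].
- by rewrite br0r // mem0v.
- by rewrite brLr // !memvD ?memvZ.
- by rewrite mem_ad_closure // zX.
have [c zgj] := zg j; rewrite ad_closure_br //; split=> //.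
by rewrite br_leibniz // zgj brZl // memvD ?memvZ ?ad_closure_br.
Qed.

Lemma ad_closure_br_sub z (W : {vspace L}) :
  (forall j, {in C, forall y, br (br z (g j)) y \in C}) ->
  (C <= W)%VS -> (forall j, {in W, forall w, br (g j) w \in W}) ->
  {in X, forall x, br z x \in W} -> {in C, forall y, br z y \in W}.
Proof.
move=> zgC CW gW zX y yC; suff: y \in C /\ br z y \in W by case.
move: y yC; apply: ad_closure_ind => [|a x y [xC zx] [yC zy]|x xX|j y [yC zy]].
- by rewrite br0r // !mem0v.
- by rewrite brLr // !memvD ?memvZ.
- by rewrite mem_ad_closure // zX.
rewrite ad_closure_br // br_leibniz // memvD ?gW //.
exact: subvP CW _ (zgC j y yC).
Qed.

Lemma ad_closure_normalizes (W : {vspace L}) :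
  (forall x, x \in X -> {in W, forall v, br x v \in W}) ->
  (forall j, {in W, forall v, br (g j) v \in W}) ->
  {in C & W, forall c v, br c v \in W}.
Proof.
move=> XW gW c v cC; move: c cC v.
apply: ad_closure_ind => [|a x y Hx Hy|//|j y Hy] v vW.
- by rewrite br0l // mem0v.
- by rewrite brLl // memvD ?memvZ ?Hx ?Hy.
have -> : br (br (g j) y) v = br (g j) (br y v) - br y (br (g j) v).
  by rewrite br_leibniz // addrK.
by apply: memvB; [apply: gW; apply: Hy | apply: Hy; apply: gW].
Qed.

End AdClosure.

Section SeqSums.
Variables (K : fieldType) (L : vectType K) (I : eqType).
Variables (s : seq I) (P : pred I) (F : I -> {vspace L}).

Lemma sumv_seq_ind (Q : L -> Prop) :
  Q 0 -> (forall u v, Q u -> Q v -> Q (u + v)) ->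
  (forall a u, P a -> u \in F a -> Q u) ->
  {in (\sum_(a <- s | P a) F a)%VS, forall y, Q y}.
Proof.
move=> Q0 QD QF; elim: s => [|a s' IH] y.
  by rewrite big_nil memv0 => /eqP ->.
rewrite big_cons; case: ifP => Pa; last exact: IH.
by case/memv_addP => u Fu [v Fv ->]; apply: QD; [exact: QF Fu | exact: IH].
Qed.

Lemma sumv_seq_sup a : a \in s -> P a -> (F a <= \sum_(b <- s | P b) F b)%VS.
Proof.
move=> + Pa; elim: s => // b s' IH; rewrite inE big_cons => /orP[/eqP <-|/IH].
  by rewrite Pa addvSl.
by case: ifP => // _ /subv_trans; apply; apply: addvSr.
Qed.

End SeqSums.

Section GradedParts.
Variables (K : fieldType) (L : vectType K) (br : L -> L -> L) (theta : nat).
Hypothesis brL : lie_bracket br.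
Local Notation deg := 'rV[int]_theta.
Variables (gr : deg -> {vspace L}) (S : seq deg).
Hypothesis gr_out : forall a, a \notin S -> gr a = 0%VS.
Hypothesis gr_direct : directv (\sum_(a <- S) gr a).
Hypothesis gr_br : forall a b, bracket_sub br (gr a) (gr b) (gr (a + b)).

Definition gpart (P : pred deg) : {vspace L} := (\sum_(a <- S | P a) gr a)%VS.

Lemma mem_gpart (P : pred deg) a u : P a -> u \in gr a -> u \in gpart P.
Proof.
move=> Pa; have [aS|aS] := boolP (a \in S); first exact/subvP/sumv_seq_sup.
by rewrite gr_out // memv0 => /eqP ->; rewrite mem0v.
Qed.

Lemma gpartS (P Q : pred deg) : {subset P <= Q} -> (gpart P <= gpart Q)%VS.
Proof.
move=> PQ; apply/subvP; apply: sumv_seq_ind => [|u v|a u Pa]; first exact: mem0v.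
  exact: memvD.
by apply: mem_gpart; apply: PQ.
Qed.

Lemma gpart_capC (P : pred deg) : (gpart P :&: gpart (predC P) = 0)%VS.
Proof.
have sumPC : (gpart P + gpart (predC P))%VS = (\sum_(a <- S) gr a)%VS.
  by rewrite [RHS](bigID P).
have dim_sum : \dim (\sum_(a <- S) gr a) =
    (\sum_(a <- S | P a) \dim (gr a) + \sum_(a <- S | ~~ P a) \dim (gr a))%N.
  by move: gr_direct; rewrite directvE [X in _ == X](bigID P) => /eqP.
have dimP : (\dim (gpart P) <= \sum_(a <- S | P a) \dim (gr a))%N.
  exact: (dimv_sum_leqif _).1.
have dimPC : (\dim (gpart (predC P)) <= \sum_(a <- S | ~~ P a) \dim (gr a))%N.
  exact: (dimv_sum_leqif _).1.
have := dimv_sum_cap (gpart P) (gpart (predC P)).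
by rewrite sumPC dim_sum => ?; apply/eqP; rewrite -dimv_eq0; apply/eqP; lia.
Qed.

Lemma gpart_disjoint (P Q : pred deg) y : {subset P <= predC Q} ->
  y \in gpart P -> y \in gpart Q -> y = 0.
Proof.
move=> PQ yP yQ; apply/eqP; rewrite -memv0 -(gpart_capC Q) memv_cap yQ.
exact: subvP (gpartS PQ) _ yP.
Qed.

Lemma gpart_sub (P : pred deg) (E : {vspace L}) :
  (E <= gpart P)%VS -> (fullv <= E + gpart (predC P))%VS -> (gpart P <= E)%VS.
Proof.
move=> EP fullE; apply/subvP => y yP.
have /memv_addP[u uE [r rP' def_y]] := subvP fullE y (memvf y).
suff r0 : r = 0 by rewrite def_y r0 addr0.
apply: (gpart_disjoint (P := predC P) (Q := P) (fun _ => id) rP').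
by rewrite -[r](addKr u) -def_y memvD // memvN (subvP EP).
Qed.

Lemma br_gpart (P : pred deg) b : (forall a, P a -> P (b + a)) ->
  {in gr b & gpart P, forall x y, br x y \in gpart P}.
Proof.
move=> Pb x y xb; move: y; apply: sumv_seq_ind => [|u v|a u Pa ua].
- by rewrite br0r // mem0v.
- by rewrite brDr //; apply: memvD.
by apply: (mem_gpart (Pb a Pa)); apply: gr_br.
Qed.

Section HomogeneousGenerators.
Variables (I : finType) (g : I -> L) (dg : I -> deg) (X : seq L).
Hypothesis g_gr : forall j, g j \in gr (dg j).

Lemma ad_closure_sub_gpart (P : pred deg) :
  (forall j a, P a -> P (dg j + a)) -> {subset X <= gpart P} ->
  (ad_closure br g X <= gpart P)%VS.
Proof.
move=> Pdg XP; apply: ad_closure_min => // j w; apply: br_gpart => //.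
exact: Pdg.
Qed.

Lemma graded_ad_closure :
  (forall x, x \in X -> exists a, x \in gr a) ->
  graded_subspace gr (ad_closure br g X).
Proof.
set C := ad_closure br g X.
have mem_sum u a : u \in C -> u \in gr a -> u \in (\sum_(b <- S) (C :&: gr b))%VS.
  move=> uC ua; have [aS|aS] := boolP (a \in S).
    by apply: subvP (sumv_seq_sup _ aS isT) _ _; rewrite memv_cap uC.
  by move: ua; rewrite gr_out // memv0 => /eqP ->; rewrite mem0v.
move=> Xgr; exists S; apply: ad_closure_min => [x xX|j].
  by have [a xa] := Xgr x xX; apply: mem_sum xa; apply: mem_ad_closure.
apply: sumv_seq_ind => [|u v|a u _ /memv_capP[uC ua]]; first by rewrite br0r // mem0v.
  by rewrite brDr //; apply: memvD.
by apply: (mem_sum _ (dg j + a)); [apply: ad_closure_br | apply: gr_br].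
Qed.

End HomogeneousGenerators.
End GradedParts.

Section Degrees.
Variable n : nat.
Local Notation deg := 'rV[int]_n.
Implicit Types (d : deg) (i j k t : 'I_n).

Definition nonneg_deg d := [forall t, 0 <= d 0 t].
Definition pos_deg d := nonneg_deg d && (d != 0).
Definition neg_deg d := [forall t, d 0 t <= 0] && (d != 0).

Lemma alphaE j t : alpha j 0 t = (t == j)%:R.
Proof. by rewrite mxE eqxx. Qed.

Lemma entryD d d' t : (d + d') 0 t = d 0 t + d' 0 t.
Proof. by rewrite mxE. Qed.

Lemma entryN d t : (- d) 0 t = - d 0 t.
Proof. by rewrite mxE. Qed.

Lemma deg_neq0 d t : d 0 t != 0 -> d != 0.
Proof. by apply: contraNneq => ->; rewrite mxE. Qed.

Lemma deg_eqP d d' : reflect (forall t, d 0 t = d' 0 t) (d == d').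
Proof.
apply: (iffP eqP) => [-> //|eq_dd']; apply/matrixP => r t.
by rewrite ord1 eq_dd'.
Qed.

Lemma alpha_eq j k : (alpha j == alpha k :> deg) = (j == k).
Proof.
apply/deg_eqP/eqP => [/(_ j)|-> //].
by rewrite !alphaE eqxx; case: eqP => // _ /eqP.
Qed.

Lemma nonneg_deg_alphaXn i m : nonneg_deg (alpha i *+ m).
Proof. by apply/forallP => t; rewrite mulmxnE alphaE mulrn_wge0 // ler0n. Qed.

Lemma pos_deg_alphaD j d : nonneg_deg d -> pos_deg (alpha j + d).
Proof.
move=> /forallP d_ge0; apply/andP; split.
    by apply/forallP => t; rewrite entryD alphaE addr_ge0 // ler0n.
by apply: (deg_neq0 (t := j)); rewrite entryD alphaE eqxx; have := d_ge0 j; lia.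
Qed.

Lemma pos_deg_alpha j : pos_deg (alpha j).
Proof.
rewrite -[alpha j]addr0; apply: pos_deg_alphaD.
by apply/forallP => t; rewrite mxE.
Qed.

Lemma pos_degD j d : pos_deg d -> pos_deg (alpha j + d).
Proof. by case/andP => d_ge0 _; apply: pos_deg_alphaD. Qed.

Lemma neg_degD j d : [forall t, d 0 t <= 0] -> neg_deg (- alpha j + d).
Proof.
move=> /forallP d_le0; apply/andP; split.
  by apply/forallP => t; rewrite entryD entryN alphaE; have := d_le0 t; case: eqP; lia.
by apply: (deg_neq0 (t := j)); rewrite entryD entryN alphaE eqxx; have := d_le0 j; lia.
Qed.

Lemma neg_deg_Nalpha j : neg_deg (- alpha j).
Proof.
rewrite -[- alpha j]addr0; apply: neg_degD.
by apply/forallP => t; rewrite mxE.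
Qed.

Lemma pos_neg_deg d : pos_deg d -> ~~ neg_deg d.
Proof.
case/andP => /forallP d_ge0 dn0; apply: contra dn0 => /andP[/forallP d_le0 _].
apply/deg_eqP => t; have := d_ge0 t; have := d_le0 t; rewrite mxE; lia.
Qed.

Lemma pos_deg0 : ~~ pos_deg 0.
Proof. by rewrite /pos_deg eqxx andbF. Qed.

Lemma alphaD_neq i j d : pos_deg d -> alpha j + d != alpha i.
Proof.
case/andP => /forallP d_ge0 dn0; have [->|ji] := eqVneq j i.
  by apply: contra dn0 => /eqP/(canRL (addKr _)); rewrite addNr => ->.
apply/deg_eqP => /(_ j); rewrite entryD !alphaE eqxx (negPf ji).
by have := d_ge0 j; lia.
Qed.

Lemma pos_root_deg (K : fieldType) (L : vectType K) (gr : deg -> {vspace L}) d :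
  pos_root gr d -> pos_deg d.
Proof. by case=> d_ge0 d_neq0 _; rewrite /pos_deg d_neq0 andbT; apply/forallP. Qed.

Section AlphaString.
Variables k i : 'I_n.

Lemma stringE m t : (alpha k + alpha i *+ m) 0 t = (t == k)%:R + (t == i)%:R *+ m.
Proof. by rewrite entryD mulmxnE !alphaE. Qed.

Lemma pos_deg_string m : pos_deg (alpha k + alpha i *+ m).
Proof. exact/pos_deg_alphaD/nonneg_deg_alphaXn. Qed.

(* For nonnegative d: d lies neither in N alpha_i nor in alpha_k + N alpha_i. *)
Definition off_string d :=
  (2 <= d 0 k) || [exists t, [&& t != i, t != k & 0 < d 0 t]].

Lemma off_stringD j d : off_string d -> off_string (alpha j + d).
Proof.
have le_d t : d 0 t <= (alpha j + d) 0 t by rewrite entryD alphaE; case: eqP; lia.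
case/orP => [le2|/existsP[t /and3P[ti tk lt0]]]; apply/orP.
  by left; apply: le_trans le2 (le_d k).
by right; apply/existsP; exists t; rewrite ti tk (lt_le_trans lt0).
Qed.

Lemma off_string_alphaD j d : j != i -> j != k -> nonneg_deg d ->
  off_string (alpha j + d).
Proof.
move=> ji jk /forallP d_ge0; apply/orP; right; apply/existsP; exists j.
by rewrite ji jk entryD alphaE eqxx; have := d_ge0 j; lia.
Qed.

Lemma off_string_alpha j : j != i -> j != k -> off_string (alpha j).
Proof.
move=> ji jk; have := off_string_alphaD ji jk (nonneg_deg_alphaXn i 0).
by rewrite mulr0n addr0.
Qed.

Hypothesis ki : k != i.

Lemma string_eq m m' :
  (alpha k + alpha i *+ m == alpha k + alpha i *+ m') = (m == m').
Proof.
apply/deg_eqP/eqP => [/(_ i)|-> //].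
by rewrite !stringE eqxx eq_sym (negPf ki) !add0r mulr1n => /eqP; rewrite eqr_nat => /eqP.
Qed.

Lemma string_neq_alpha m : alpha k + alpha i *+ m != alpha i.
Proof.
apply/deg_eqP => /(_ k); rewrite stringE alphaE eqxx (negPf ki) mul0rn addr0.
by move/eqP; rewrite oner_eq0.
Qed.

Lemma off_string_alphaD_string j m : j != i ->
  off_string (alpha j + (alpha k + alpha i *+ m)).
Proof.
move=> ji; have [->|jk] := eqVneq j k; last first.
  by apply: off_string_alphaD => //; case/andP: (pos_deg_string m).
by apply/orP; left; rewrite entryD stringE alphaE eqxx (negPf ki) mul0rn addr0.
Qed.

Lemma string_off_string m : ~~ off_string (alpha k + alpha i *+ m).
Proof.
rewrite negb_or stringE eqxx (negPf ki) mul0rn addr0 /=.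
apply/existsPn => t; rewrite stringE.
by case: (t =P i) => //= _; case: (t =P k) => //= _; rewrite mul0rn addr0 ltxx.
Qed.

End AlphaString.
End Degrees.

Section Contragredient.
Variables (K : fieldType) (theta : nat) (A : 'M[K]_theta) (L : vectType K).
Variables (br : L -> L -> L) (h : {vspace L}) (e f hc : 'I_theta -> L).
Variables (xi : 'I_theta -> L -> K) (gr : 'rV[int]_theta -> {vspace L}).
Variable S : seq 'rV[int]_theta.
Local Notation deg := 'rV[int]_theta.

Hypothesis brL : lie_bracket br.
Hypothesis hc_h : forall j, hc j \in h.
Hypothesis xi_hc : forall j k, xi k (hc j) = A j k.
Hypothesis hc_free : forall c : 'I_theta -> K, \sum_k c k *: hc k = 0 -> forall k, c k = 0.
Hypothesis br_hh : forall x y, x \in h -> y \in h -> br x y = 0.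
Hypothesis br_he : forall j x, x \in h -> br x (e j) = xi j x *: e j.
Hypothesis br_hf : forall j x, x \in h -> br x (f j) = - (xi j x *: f j).
Hypothesis br_ef : forall j k, br (e j) (f k) = if j == k then hc j else 0.
Hypothesis generated : forall U : {vspace L}, subalgebra br U -> (h <= U)%VS ->
  (forall j, e j \in U /\ f j \in U) -> U = fullv.

Definition nplus : {vspace L} := ad_closure br e (codom e).
Definition nminus : {vspace L} := ad_closure br f (codom f).
Definition triangular : {vspace L} := (nminus + h + nplus)%VS.

Lemma e_nplus j : e j \in nplus.
Proof. exact/mem_ad_closure/codom_f. Qed.

Lemma f_nminus j : f j \in nminus.
Proof. exact/mem_ad_closure/codom_f. Qed.

Lemma br_ef_h j k : br (e j) (f k) \in h.
Proof. by rewrite br_ef; case: eqP => _; rewrite ?hc_h ?mem0v. Qed.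

Lemma br_fe_h j k : br (f j) (e k) \in h.
Proof. by rewrite br_anticomm // memvN br_ef_h. Qed.

Lemma br_fe j k : br (f j) (e k) = if j == k then - hc j else 0.
Proof. by rewrite br_anticomm // br_ef eq_sym; case: eqP => [->|_]; rewrite ?oppr0. Qed.

Lemma e_neq0 k : e k != 0.
Proof.
apply/eqP => ek0; have := br_ef k k; rewrite eqxx ek0 br0l // => /esym hc0.
have sum0 : \sum_t (t == k)%:R *: hc t = 0 :> L.
  rewrite (bigD1 k) //= eqxx scale1r hc0 add0r.
  by rewrite big1 // => t /negPf ->; rewrite scale0r.
by have := hc_free sum0 k; rewrite eqxx => /eqP; rewrite oner_eq0.
Qed.

Lemma br_h_nplus z : z \in h -> {in nplus, forall y, br z y \in nplus}.
Proof.
move=> zh; apply: ad_closure_eigen_stable => [//|j|_ /codomP[j ->]].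
  by exists (xi j z); apply: br_he.
by rewrite br_he // memvZ // e_nplus.
Qed.

Lemma br_h_nminus z : z \in h -> {in nminus, forall y, br z y \in nminus}.
Proof.
move=> zh; apply: ad_closure_eigen_stable => [//|j|_ /codomP[j ->]].
  by exists (- xi j z); rewrite br_hf // scaleNr.
by rewrite br_hf // memvN memvZ // f_nminus.
Qed.

Lemma br_e_h j x : x \in h -> br (e j) x \in nplus.
Proof. by move=> xh; rewrite br_anticomm // br_he // memvN memvZ // e_nplus. Qed.

Lemma br_f_h j x : x \in h -> br (f j) x \in nminus.
Proof. by move=> xh; rewrite br_anticomm // br_hf // opprK memvZ // f_nminus. Qed.

Lemma br_f_nplus j : {in nplus, forall y, br (f j) y \in (nplus + h)%VS}.
Proof.
apply: ad_closure_br_sub => [//|k y yC|||_ /codomP[k ->]].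
- exact: br_h_nplus (br_fe_h j k) y yC.
- exact: addvSl.
- move=> k _ /memv_addP[y yC [x xh ->]]; rewrite brDr //.
  by apply: memvD; apply: (subvP (addvSl _ _)); [apply: ad_closure_br | apply: br_e_h].
- exact/(subvP (addvSr _ _))/br_fe_h.
Qed.

Lemma br_e_nminus j : {in nminus, forall y, br (e j) y \in (nminus + h)%VS}.
Proof.
apply: ad_closure_br_sub => [//|k y yC|||_ /codomP[k ->]].
- exact: br_h_nminus (br_ef_h j k) y yC.
- exact: addvSl.
- move=> k _ /memv_addP[y yC [x xh ->]]; rewrite brDr //.
  by apply: memvD; apply: (subvP (addvSl _ _)); [apply: ad_closure_br | apply: br_f_h].
- exact/(subvP (addvSr _ _))/br_ef_h.
Qed.

Lemma triangular_ind (P : L -> Prop) :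
  (forall u v, P u -> P v -> P (u + v)) ->
  {in nminus, forall c, P c} -> {in h, forall x, P x} -> {in nplus, forall d, P d} ->
  {in triangular, forall y, P y}.
Proof.
move=> PD Pm Ph Pp _ /memv_addP[_ /memv_addP[c cm [x xh ->]] [d dp ->]].
exact: PD (PD _ _ (Pm c cm) (Ph x xh)) (Pp d dp).
Qed.

Lemma nminus_h_sub_triangular : (nminus + h <= triangular)%VS.
Proof. exact: addvSl. Qed.

Lemma nplus_sub_triangular : (nplus <= triangular)%VS.
Proof. exact: addvSr. Qed.

Lemma nminus_sub_triangular : (nminus <= triangular)%VS.
Proof. exact: subv_trans (addvSl _ _) nminus_h_sub_triangular. Qed.

Lemma h_sub_triangular : (h <= triangular)%VS.
Proof. exact: subv_trans (addvSr _ _) nminus_h_sub_triangular. Qed.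

Lemma nplus_h_sub_triangular : (nplus + h <= triangular)%VS.
Proof. by rewrite subv_add nplus_sub_triangular h_sub_triangular. Qed.

Lemma br_e_triangular j : {in triangular, forall y, br (e j) y \in triangular}.
Proof.
apply: triangular_ind => [u v eu ev|c cm|x xh|d dp]; first by rewrite brDr // memvD.
- exact/(subvP nminus_h_sub_triangular)/br_e_nminus.
- exact/(subvP nplus_sub_triangular)/br_e_h.
- exact/(subvP nplus_sub_triangular)/ad_closure_br.
Qed.

Lemma br_f_triangular j : {in triangular, forall y, br (f j) y \in triangular}.
Proof.
apply: triangular_ind => [u v fu fv|c cm|x xh|d dp]; first by rewrite brDr // memvD.
- exact/(subvP nminus_sub_triangular)/ad_closure_br.
- exact/(subvP nminus_sub_triangular)/br_f_h.
- exact/(subvP nplus_h_sub_triangular)/br_f_nplus.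
Qed.

Lemma br_h_triangular z : z \in h -> {in triangular, forall y, br z y \in triangular}.
Proof.
move=> zh; apply: triangular_ind => [u v zu zv|c cm|x xh|d dp].
- by rewrite brDr // memvD.
- exact/(subvP nminus_sub_triangular)/br_h_nminus.
- by rewrite br_hh // mem0v.
- exact/(subvP nplus_sub_triangular)/br_h_nplus.
Qed.

Lemma triangular_normalizes (W : {vspace L}) :
  (forall j, {in W, forall w, br (e j) w \in W}) ->
  (forall j, {in W, forall w, br (f j) w \in W}) ->
  (forall z, z \in h -> {in W, forall w, br z w \in W}) ->
  {in triangular & W, forall u w, br u w \in W}.
Proof.
move=> eW fW hW u w uT; move: u uT w.
apply: triangular_ind => [u v uW vW w wW|c cm|x xh|d dp].
- by rewrite brDl // memvD ?uW ?vW.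
- move=> w wW; apply: (ad_closure_normalizes brL _ fW cm wW).
  by move=> _ /codomP[k ->]; apply: fW.
- exact: hW.
- move=> w wW; apply: (ad_closure_normalizes brL _ eW dp wW).
  by move=> _ /codomP[k ->]; apply: eW.
Qed.

Lemma triangular_full : triangular = fullv.
Proof.
apply: generated.
- exact: triangular_normalizes br_e_triangular br_f_triangular br_h_triangular.
- exact: h_sub_triangular.
- move=> j; rewrite (subvP nplus_sub_triangular _ (e_nplus j)).
  by rewrite (subvP nminus_sub_triangular _ (f_nminus j)).
Qed.

Lemma fullv_triangular (W : {vspace L}) :
  (nminus <= W)%VS -> (h <= W)%VS -> (nplus <= W)%VS -> (fullv <= W)%VS.
Proof. by move=> mW hW pW; rewrite -triangular_full !subv_add mW hW pW. Qed.

Lemma stable_lie_ideal (W : {vspace L}) :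
  (forall j, {in W, forall w, br (e j) w \in W}) ->
  (forall j, {in W, forall w, br (f j) w \in W}) ->
  (forall z, z \in h -> {in W, forall w, br z w \in W}) ->
  lie_ideal br W.
Proof.
move=> eW fW hW u w _; apply: (triangular_normalizes eW fW hW) => //.
by rewrite triangular_full memvf.
Qed.

Hypothesis gr_out : forall a, a \notin S -> gr a = 0%VS.
Hypothesis gr_direct : directv (\sum_(a <- S) gr a).
Hypothesis gr_br : forall a b, bracket_sub br (gr a) (gr b) (gr (a + b)).
Hypothesis h_gr0 : (h <= gr 0)%VS.
Hypothesis e_gr : forall j, e j \in gr (alpha j).
Hypothesis f_gr : forall j, f j \in gr (- alpha j).
Hypothesis no_graded_ideal : forall I : {vspace L}, lie_ideal br I ->
  graded_subspace gr I -> (I :&: h = 0)%VS -> I = 0%VS.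

Local Notation gpart := (gpart gr S).
Local Notation mem_gpart := (mem_gpart gr_out).
Local Notation gpartS := (gpartS gr_out).
Local Notation gpart_sub := (gpart_sub gr_out gr_direct).
Local Notation gpart_disjoint := (gpart_disjoint gr_out gr_direct).
Local Notation br_gpart := (br_gpart brL gr_out gr_br).
Local Notation ad_closure_br := (ad_closure_br brL).

Lemma h_gpart (P : pred deg) : P 0 -> (h <= gpart P)%VS.
Proof. by move=> P0; apply/subvP => x /(subvP h_gr0); apply: mem_gpart. Qed.

Lemma nminus_neg : (nminus <= gpart (@neg_deg theta))%VS.
Proof.
apply: (ad_closure_sub_gpart (dg := fun j => - alpha j) brL gr_out gr_br f_gr).
  by move=> j a /andP[a_le0 _]; apply: neg_degD.
move=> _ /codomP[j ->].
exact: mem_gpart (neg_deg_Nalpha j) (f_gr j).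
Qed.

Lemma capv_h_pos (I : {vspace L}) : (I <= gpart (@pos_deg theta))%VS -> (I :&: h = 0)%VS.
Proof.
move=> I_pos; apply/eqP; rewrite -subv0; apply/subvP => y /memv_capP[yI yh].
rewrite memv0; apply/eqP/(gpart_disjoint (P := @pos_deg theta) (Q := pred1 0)).
- by move=> a a_pos; apply: contraTN a_pos => /eqP ->; apply: pos_deg0.
- exact: subvP I_pos _ yI.
- by apply: subvP (h_gpart _) _ yh; rewrite inE.
Qed.

Section SimpleRoot.
Variable i : 'I_theta.

Definition nplus_except : {vspace L} := ad_closure br e [seq e k | k in predC1 i].

Definition pos_deg_except (d : deg) := pos_deg d && (d != alpha i).

Lemma nplus_except_pos : (nplus_except <= gpart pos_deg_except)%VS.
Proof.
apply: (ad_closure_sub_gpart (dg := @alpha theta) brL gr_out gr_br e_gr).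
  by move=> j a /andP[a_pos _]; rewrite /pos_deg_except pos_degD // alphaD_neq.
move=> _ /imageP[k ki ->].
by apply: mem_gpart _ (e_gr k); rewrite /pos_deg_except pos_deg_alpha alpha_eq.
Qed.

Lemma nplus_sub_except : (nplus <= nplus_except + <[e i]>)%VS.
Proof.
have e_except k : k != i -> e k \in nplus_except.
  by move=> ki; apply/mem_ad_closure/image_f.
apply: ad_closure_min => [_ /codomP[j ->]|j _ /memv_addP[u uE [_ /vlineP[t ->] ->]]].
  have [->|ji] := eqVneq j i; first exact/(subvP (addvSr _ _))/memv_line.
  exact/(subvP (addvSl _ _))/e_except.
rewrite brDr // brZr //; apply/(subvP (addvSl _ _))/memvD; first exact: ad_closure_br.
apply: memvZ; have [->|ji] := eqVneq j i; first by rewrite brxx // mem0v.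
by rewrite br_anticomm // memvN ad_closure_br ?e_except.
Qed.

Lemma root_space_sub_except g : pos_deg g -> g != alpha i -> (gr g <= nplus_except)%VS.
Proof.
move=> g_pos g_i; apply: subv_trans (gpart_sub nplus_except_pos _).
  by apply/subvP => y; apply: mem_gpart; rewrite /pos_deg_except g_pos.
have not_pos_except : {subset @neg_deg theta <= predC pos_deg_except}.
  by move=> a a_neg; apply/negP => /andP[/pos_neg_deg/negP/(_ a_neg)].
apply: fullv_triangular.
- exact: subv_trans nminus_neg (subv_trans (gpartS not_pos_except) (addvSr _ _)).
- by apply: subv_trans (h_gpart _) (addvSr _ _); rewrite !inE negb_and pos_deg0.
apply: subv_trans nplus_sub_except (addvS (subvv _) _); rewrite -memvE.
by apply: mem_gpart (e_gr i); rewrite !inE negb_and eqxx orbT.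
Qed.

Lemma nplus_except_sub (U : {vspace L}) : subalgebra br U ->
  {in U, forall u, br (e i) u \in U} -> (forall k, k != i -> e k \in U) ->
  (nplus_except <= U)%VS.
Proof.
move=> U_sub eiU eU; apply: ad_closure_min => [_ /imageP[k ki ->]|j u uU].
  exact: eU.
by have [->|ji] := eqVneq j i; [apply: eiU | apply: U_sub; rewrite ?eU].
Qed.

Variable p : nat.
Hypothesis p_gt1 : (1 < p)%N.
Hypothesis p_char0 : p%:R = 0 :> K.
Hypothesis Aii : A i i = 0 \/ A i i = 2.

Section AlphaString.
Variable k : 'I_theta.
Hypothesis ki : k != i.

Definition string_vec m := iter m (br (e i)) (e k).

Lemma string_vecS m : string_vec m.+1 = br (e i) (string_vec m).
Proof. by []. Qed.

Lemma string_vec_gr m : string_vec m \in gr (alpha k + alpha i *+ m).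
Proof.
elim: m => [|m IH]; first by rewrite mulr0n addr0 e_gr.
by rewrite string_vecS mulrS addrCA; apply: gr_br.
Qed.

Lemma br_h_string_vec z m : z \in h ->
  br z (string_vec m) = (xi k z + m%:R * xi i z) *: string_vec m.
Proof.
move=> zh; elim: m => [|m IH]; first by rewrite mul0r addr0 br_he.
rewrite string_vecS br_leibniz // br_he // brZl // IH brZr // -scalerDl.
by congr (_ *: _); rewrite mulrS mulrDl mul1r addrCA.
Qed.

Lemma br_f_string_vec j m : j != i -> j != k -> br (f j) (string_vec m) = 0.
Proof.
move=> ji jk; elim: m => [|m IH]; first by rewrite br_fe (negPf jk).
by rewrite string_vecS br_leibniz // IH br0r // addr0 br_fe (negPf ji) br0l.
Qed.

Lemma br_fk_string_vec m : br (f k) (string_vec m.+2) = 0.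
Proof.
have fk_w1 : br (f k) (string_vec 1) = A k i *: e i.
  rewrite string_vecS br_leibniz // br_fe (negPf ki) br0l // add0r.
  by rewrite br_fe eqxx brNr // br_anticomm // opprK br_he // xi_hc.
elim: m => [|m IH]; rewrite string_vecS br_leibniz // br_fe (negPf ki) br0l // add0r.
  by rewrite fk_w1 brZr // brxx // scaler0.
by rewrite IH br0r.
Qed.

Lemma br_fi_string_vec m : br (f i) (string_vec m) =
  - (m%:R * A i k + 'C(m, 2)%:R * A i i) *: string_vec m.-1.
Proof.
elim: m => [|m IH]; first by rewrite /= br_fe eq_sym (negPf ki) !mul0r addr0 oppr0 scale0r.
rewrite string_vecS br_leibniz // br_fe eqxx brNl // br_h_string_vec // IH brZr // !xi_hc.
case: m IH => [|m] IH; first by rewrite /= !mul0r !addr0 oppr0 scale0r addr0 mul1r scaleNr.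
rewrite [m.+2.-1]/= -string_vecS -scaleNr -scalerDl; congr (_ *: _).
rewrite (binS m.+1 1) bin1 natrD (mulrS 1 m.+1).
set a := m.+1%:R; set b := 'C(m.+1, 2)%:R; ring.
Qed.

Lemma br_f_string_vec_p j : br (f j) (string_vec p) = 0.
Proof.
have [->|ji] := eqVneq j i.
  rewrite br_fi_string_vec p_char0 mul0r add0r; case: Aii => ->.
    by rewrite mulr0 oppr0 scale0r.
  have -> : 'C(p, 2)%:R * 2 = ((p - 1) * p)%:R :> K.
    by rewrite -(natrM K _ 2) mulnC mul_bin_left bin1.
  by rewrite natrM p_char0 mulr0 oppr0 scale0r.
have [->|jk] := eqVneq j k; last exact: br_f_string_vec.
by case: p p_gt1 => [|[|m]] // _; apply: br_fk_string_vec.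
Qed.

Lemma string_vec_p_eq0 : string_vec p = 0.
Proof.
set I := ad_closure br e [:: string_vec p].
have wI : string_vec p \in I by apply/mem_ad_closure; rewrite mem_seq1.
have eI j : {in I, forall y, br (e j) y \in I} by apply: ad_closure_br.
have hI z : z \in h -> {in I, forall y, br z y \in I}.
  move=> zh; apply: ad_closure_eigen_stable => // [j|_ /[!inE]/eqP ->].
    by exists (xi j z); apply: br_he.
  by rewrite br_h_string_vec // memvZ.
have fI j : {in I, forall y, br (f j) y \in I}.
  apply: ad_closure_br_sub => [//|l y yI|||_ /[!inE]/eqP ->].
  - exact: hI (br_fe_h j l) y yI.
  - exact: subvv.
  - exact: eI.
  - by rewrite br_f_string_vec_p mem0v.
have I_pos : (I <= gpart (@pos_deg theta))%VS.
  apply: (ad_closure_sub_gpart (dg := @alpha theta) brL gr_out gr_br e_gr).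
    by move=> j a; apply: pos_degD.
  by move=> _ /[!inE]/eqP ->; apply: mem_gpart (string_vec_gr p); apply: pos_deg_string.
suff I0 : I = 0%VS by move: wI; rewrite I0 memv0 => /eqP.
apply: no_graded_ideal; first exact: stable_lie_ideal eI fI hI.
  apply: (graded_ad_closure (dg := @alpha theta) brL gr_out gr_br e_gr).
  by move=> _ /[!inE]/eqP ->; exists (alpha k + alpha i *+ p); apply: string_vec_gr.
exact: capv_h_pos I_pos.
Qed.

Section StringEnd.
Variable l : nat.
Hypothesis wl0 : string_vec l = 0.

Local Notation string_span := (<<mkseq string_vec l>>%VS).

Lemma string_vec_span m : string_vec m \in string_span.
Proof.
have [lt_ml|le_lm] := ltnP m l; first by rewrite memv_span // map_f // mem_iota.
suff -> : string_vec m = 0 by apply: mem0v.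
rewrite -(subnK le_lm) /string_vec iterD -/(string_vec l) wl0.
by elim: (m - l)%N => //= n ->; rewrite br0r.
Qed.

Lemma nplus_sub_string :
  (nplus <= <[e i]> + string_span + gpart (off_string k i))%VS.
Proof.
set T := (<[e i]> + string_span + gpart (off_string k i))%VS.
have line_T : (<[e i]> <= T)%VS by apply: subv_trans (addvSl _ _) (addvSl _ _).
have span_T : (string_span <= T)%VS by apply: subv_trans (addvSr _ _) (addvSl _ _).
have off_T : (gpart (off_string k i) <= T)%VS by apply: addvSr.
apply: ad_closure_min => [_ /codomP[j ->]|j v].
  have [->|ji] := eqVneq j i; first exact/(subvP line_T)/memv_line.
  have [->|jk] := eqVneq j k; first exact/(subvP span_T)/(string_vec_span 0).
  exact: subvP off_T _ (mem_gpart (off_string_alpha ji jk) (e_gr j)).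
case/memv_addP=> _ /memv_addP[_ /vlineP[t ->] [w w_span ->]] [q q_off ->].
rewrite !brDr // brZr //.
apply: memvD; first apply: memvD.
- apply: memvZ; have [->|ji] := eqVneq j i; first by rewrite brxx // mem0v.
  have [->|jk] := eqVneq j k.
    by rewrite br_anticomm // memvN; apply/(subvP span_T)/(string_vec_span 1).
  apply/(subvP off_T)/mem_gpart; last exact: gr_br (e_gr j) (e_gr i).
  exact: off_string_alphaD ji jk (nonneg_deg_alphaXn i 1).
- move: w w_span; apply: span_ind => [|a x y xT yT|_ /mapP[m _ ->]].
  + by rewrite br0r // mem0v.
  + by rewrite brLr // memvD // memvZ.
  have [->|ji] := eqVneq j i; first exact/(subvP span_T)/(string_vec_span m.+1).
  apply/(subvP off_T)/mem_gpart; last exact: gr_br (e_gr j) (string_vec_gr m).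
  exact: off_string_alphaD_string.
- apply/(subvP off_T)/(br_gpart _ (e_gr j) q_off) => a; apply: off_stringD.
Qed.

Lemma string_end : gr (alpha k + alpha i *+ l) = 0%VS.
Proof.
have d_pos := pos_deg_string k i l.
apply/eqP; rewrite -subv0; apply: subv_trans (gpart_sub (sub0v _) _).
  by apply/subvP => y; apply: mem_gpart (eqxx _).
rewrite add0v; apply: fullv_triangular.
- apply: subv_trans nminus_neg (gpartS _) => a a_neg; rewrite !inE.
  by apply: contraTneq a_neg => <-; apply: pos_neg_deg.
- by apply: h_gpart; rewrite !inE; apply: contraTneq d_pos => ->; apply: pos_deg0.
apply: subv_trans nplus_sub_string _; rewrite !subv_add -andbA; apply/and3P; split.
- by rewrite -memvE; apply: mem_gpart (e_gr i); rewrite !inE string_neq_alpha.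
- apply/span_subvP => _ /mapP[m m_lt ->]; apply: mem_gpart (string_vec_gr m).
  move: m_lt; rewrite mem_iota add0n => /andP[_ m_lt].
  by rewrite !inE (string_eq ki) eq_sym ltn_eqF.
- apply: gpartS => a a_off; rewrite !inE.
  by apply: contraTneq a_off => <-; apply: string_off_string.
Qed.

End StringEnd.

Lemma alpha_string_gen : exists l,
  [/\ (1 <= l <= p)%N, string_gen gr i l (alpha k) & e k \in Mstring gr i l (alpha k)].
Proof.
have w_eq0 : exists m, string_vec m == 0 by exists p; rewrite string_vec_p_eq0.
have [l /eqP wl0 l_min] := ex_minnP w_eq0.
have l_gt0 : (0 < l)%N by case: l wl0 {l_min} => // /eqP; rewrite (negPf (e_neq0 k)).
exists l; split; first by rewrite l_gt0 l_min ?string_vec_p_eq0.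
- split; first by rewrite alpha_eq.
  + move=> m lt_ml; have /andP[/forallP m_ge0 m_neq0] := pos_deg_string k i m; split => //.
    apply: contraTneq lt_ml => grm0; rewrite -leqNgt l_min //.
    by have := string_vec_gr m; rewrite grm0 memv0.
  + by case=> /(_ i); rewrite entryD entryN !alphaE eqxx eq_sym (negPf ki).
  + by case=> _ _; rewrite string_end ?eqxx.
apply: subvP (sumv_sup (Ordinal l_gt0) _ (subvv _)) _ _ => //=.
by rewrite mulr0n addr0 e_gr.
Qed.

End AlphaString.

Lemma Mstring_sub_generated j beta : string_gen gr i j beta ->
  in_generated_subalgebra br gr p i e (Mstring gr i j beta).
Proof.
case=> beta_i beta_roots _ _ U [_ U_sub eiU] M_U.
have eU k : k != i -> e k \in U.
  move=> ki; have [l [l_p l_gen ek]] := alpha_string_gen ki.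
  exact: subvP (M_U k l ki l_p l_gen) _ ek.
apply/subv_sumP => -[m lt_mj] _; apply: subv_trans (nplus_except_sub U_sub eiU eU).
apply: root_space_sub_except; first exact/pos_root_deg/beta_roots.
case: m lt_mj => [|m] lt_mj; first by rewrite mulr0n addr0.
by rewrite mulrS addrCA alphaD_neq // (pos_root_deg (beta_roots m _)) // ltnW.
Qed.

End SimpleRoot.
End Contragredient.

Theorem proposition4p8 (K : closedFieldType) (p : nat) (theta : nat)
  (A : 'M[K]_theta)
  (L : vectType K) (br : L -> L -> L) (h : {vspace L})
  (e f hc : 'I_theta -> L) (xi : 'I_theta -> L -> K)
  (gr : 'rV[int]_theta -> {vspace L}) (i : 'I_theta)
  (beta : 'rV[int]_theta) (j : nat) :
  prime p -> p \in [pchar K] ->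
  (forall k : 'I_theta, A k k = 0 \/ A k k = 2) ->
  (forall k l : 'I_theta, k != l -> (A k l == 0) = (A l k == 0)) ->
  is_contragredient br A h e f hc xi gr ->
  (1 <= j <= p)%N -> string_gen gr i j beta ->
  in_generated_subalgebra br gr p i e (Mstring gr i j beta).
Proof.
move=> p_prime p_char Akk _ gA _ beta_gen.
case: gA => brL [_ [hc_h xi_hc] _ _ hc_free] [br_hh br_he br_hf br_ef]
  [generated [[S [_ gr_out gr_direct _ gr_br]] h_gr0 e_gr f_gr]] no_graded_ideal.
exact: (Mstring_sub_generated brL hc_h xi_hc hc_free br_hh br_he br_hf br_ef generated
  gr_out gr_direct gr_br h_gr0 e_gr f_gr no_graded_ideal
  (prime_gt1 p_prime) (pcharf0 p_char) (Akk i) beta_gen).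
Qed.
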